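(* Let $(f,g)$ be a Ribaucour pair of $(\mathfrak{m}^1,\mathfrak{m}^2)$-type, let $\lambda\in\mathbb{R}$, and let $\sigma_n$ be the inversion with respect to $\mathfrak{n}:=\mathfrak{m}^1+\lambda\mathfrak{m}^2+\langle\mathfrak{m}^1+\lambda\mathfrak{m}^2,\mathfrak{p}\rangle\mathfrak{p}$. Then $(f,\sigma_n(g))$ is also a Ribaucour pair, and it has the same (R-)evolution map as $(f,g)$.
   Context: Light cone model: $\mathbb{R}^{4,2}$ with form of signature $(4,2)$, light cone $\mathcal{L}$, $\mathbb{P}(\mathcal{L})$; fixed $\mathfrak{p}$ with $\langle\mathfrak{p},\mathfrak{p}\rangle=-1$; $v$ with $\langle\mathfrak{v},\mathfrak{p}\rangle=0$ are points of $\mathbb{R}^3\cup\{\infty\}$, others oriented spheres; incidence = orthogonality. Inversion in $\mathfrak{a}$ ($\langle\mathfrak{a},\mathfrak{a}\rangle\ne0$): $\sigma_a(x)=x-\frac{2\langle x,\mathfrak{a}\rangle}{\langle\mathfrak{a},\mathfrak{a}\rangle}\mathfrak{a}$; M-inversion if $\mathfrak{a}\perp\mathfrak{p}$. Discrete curves are maps from consecutive integers to points. Ribaucour pair $(f,g)$: $f_i,f_j,g_j,g_i$ concircular for each edge; with representatives satisfying $\mathfrak{f}_i-\mathfrak{f}_j+\mathfrak{g}_j-\mathfrak{g}_i=0$, the R-evolution map consists of the M-inversions in $\mathfrak{r}_{ij}=\mathfrak{f}_i-\mathfrak{f}_j=\mathfrak{g}_i-\mathfrak{g}_j$ (mapping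 $f_i\mapsto f_j$, $g_i\mapsto g_j$). The pair is of $(\mathfrak{m}^1,\mathfrak{m}^2)$-type if $\mathrm{span}\{\mathfrak{m}^1,\mathfrak{m}^2,\mathfrak{p}\}$ is 3-dimensional and consists of fixed points of all inversions of the R-evolution map. *)

(* Light cone model of Lie sphere geometry in R^{4,2}. *)
From HB Require Import structures.
From mathcomp Require Import all_boot all_order all_algebra.
From mathcomp Require Import reals.
Set Implicit Arguments. Unset Strict Implicit. Unset Printing Implicit Defensive.
Import Order.TTheory GRing.Theory Num.Theory.
Local Open Scope ring_scope.

Section LightCone.
Variable R : realType.

Definition vec := 'rV[R]_6.

Definition lf (x y : vec) : R :=
  \sum_(i < 6) ((if (i < 4)%N then 1 else -1) * x 0 i * y 0 i).

(* inversion in a (meaningful when lf a a <> 0) *)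
Definition inversion (a : vec) (x : vec) : vec :=
  x - ((2 * lf x a) / lf a a) *: a.

(* x is a representative of a point of R^3 \cup {oo}, i.e. of an element
   of P(L) orthogonal to p *)
Definition is_point (p v : vec) : Prop := v != 0 /\ lf v v = 0 /\ lf v p = 0.

Definition proj_eq (v w : vec) : Prop := exists c : R, c != 0 /\ w = c *: v.

Definition consecutive (D : int -> Prop) : Prop :=
  forall i j k : int, D i -> D k -> i <= j -> j <= k -> D j.

Definition edge (D : int -> Prop) (i : int) : Prop := D i /\ D (i + 1).

Definition point_curve (D : int -> Prop) (p : vec) (f : int -> vec) : Prop :=
  forall i, D i -> is_point p (f i).

Definition concircular (a b c d : vec) : Prop :=
  (\rank (col_mx (col_mx a b) (col_mx c d)) <= 3)%N.

Definition ribaucour_pair (D : int -> Prop) (p : vec) (f g : int -> vec) : Prop :=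
  point_curve D p f /\ point_curve D p g /\
  forall i, edge D i -> concircular (f i) (f (i + 1)) (g (i + 1)) (g i).

(* s is the R-evolution map of the pair (f,g): for suitable representatives
   f', g' with f'_i - f'_j + g'_j - g'_i = 0 on each edge (i, j = i+1),
   s i is the (M-)inversion in r_ij = f'_i - f'_j. *)
Definition R_evolution (D : int -> Prop) (f g : int -> vec)
  (s : int -> vec -> vec) : Prop :=
  exists f' g' : int -> vec,
    (forall i, D i -> proj_eq (f i) (f' i) /\ proj_eq (g i) (g' i)) /\
    forall i, edge D i ->
      f' i - f' (i + 1) + g' (i + 1) - g' i = 0 /\
      lf (f' i - f' (i + 1)) (f' i - f' (i + 1)) != 0 /\
      (forall x, s i x = inversion (f' i - f' (i + 1)) x).

Definition in_span3 (a b c x : vec) : Prop :=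
  exists x1 x2 x3 : R, x = x1 *: a + x2 *: b + x3 *: c.

Definition of_type (D : int -> Prop) (p : vec) (s : int -> vec -> vec)
  (m1 m2 : vec) : Prop :=
  \rank (col_mx (col_mx m1 m2) p) = 3%N /\
  forall i x, edge D i -> in_span3 m1 m2 p x -> s i x = x.

End LightCone.

From HB Require Import structures.
From mathcomp Require Import all_boot all_order all_algebra.
From mathcomp Require Import reals.
From mathcomp Require Import ring zify.
Set Implicit Arguments. Unset Strict Implicit. Unset Printing Implicit Defensive.
Import Order.TTheory GRing.Theory Num.Theory.
Local Open Scope ring_scope.

(* Since n lies in span{m1, m2, p}, every inversion of the R-evolution map
   fixes n, i.e. n is orthogonal to every r_ij = f'_i - f'_j; the p-component
   of n is chosen so that n is also orthogonal to p.  Hence the linear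
   isometry sigma_n fixes each r_ij and p, so replacing g' by
   sigma_n(g') preserves the relation f'_i - f'_j + g'_j - g'_i = 0 with the
   same vectors r_ij: the evolution map is unchanged, sigma_n(g) is again a
   curve of points, and the relation itself gives concircularity. *)

Section LightConeGeometry.
Variable R : realType.
Implicit Types (a x y z : vec R) (c : R).

Lemma lfC x y : lf x y = lf y x.
Proof. by apply: eq_bigr => i _; ring. Qed.

Lemma lf0l y : lf 0 y = 0.
Proof. by rewrite /lf big1 // => i _; rewrite mxE; ring. Qed.

Lemma lfDl x y z : lf (x + y) z = lf x z + lf y z.
Proof. rewrite /lf -big_split; apply: eq_bigr => i _; rewrite !mxE /=; ring. Qed.

Lemma lfZl c x z : lf (c *: x) z = c * lf x z.
Proof. rewrite /lf mulr_sumr; apply: eq_bigr => i _; rewrite !mxE /=; ring. Qed.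

Lemma lfBl x y z : lf (x - y) z = lf x z - lf y z.
Proof. by rewrite lfDl -scaleN1r lfZl mulN1r. Qed.

Lemma lfZr c x z : lf z (c *: x) = c * lf z x.
Proof. by rewrite lfC lfZl lfC. Qed.

Lemma lfBr x y z : lf z (x - y) = lf z x - lf z y.
Proof. by rewrite !(lfC z) lfBl. Qed.

Lemma lf_neq0_vec a : lf a a != 0 -> a != 0.
Proof. by apply: contraNneq => ->; rewrite lf0l. Qed.

Lemma inversionZ a c x : inversion a (c *: x) = c *: inversion a x.
Proof. by rewrite /inversion lfZl; apply/rowP => j; rewrite !mxE; ring. Qed.

Lemma inversionB a x y : inversion a (x - y) = inversion a x - inversion a y.
Proof. by rewrite /inversion lfBl; apply/rowP => j; rewrite !mxE; ring. Qed.

Lemma inversion_id a x : lf x a = 0 -> inversion a x = x.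
Proof. by move=> xa0; rewrite /inversion xa0 mulr0 mul0r scale0r subr0. Qed.

Lemma inversion_fixE a x : lf a a != 0 ->
  (inversion a x == x) = (lf x a == 0).
Proof.
move=> aa0; rewrite /inversion subr_eq addrC -subr_eq subrr eq_sym scaler_eq0.
rewrite (negbTE (lf_neq0_vec aa0)) orbF !mulf_eq0 invr_eq0 (negbTE aa0) orbF.
by rewrite pnatr_eq0.
Qed.

Lemma inversionK a : lf a a != 0 -> involutive (inversion a).
Proof.
move=> aa0 x; rewrite {1}/inversion lfBl lfZl.
by apply/rowP => j; rewrite !mxE; field.
Qed.

Lemma inversion_isometry a x y : lf a a != 0 ->
  lf (inversion a x) (inversion a y) = lf x y.
Proof.
by move=> aa0; rewrite /inversion !(lfBl, lfBr, lfZl, lfZr) (lfC a y); field.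
Qed.

Lemma inversion_eq0 a x : lf a a != 0 -> (inversion a x == 0) = (x == 0).
Proof.
move=> aa0; have inv0 := inversion_id (lf0l a).
apply/eqP/eqP => [ax0|->//].
by rewrite -(inversionK aa0 x) ax0 inv0.
Qed.

Lemma is_point_inversion p a v : lf a a != 0 -> lf p a = 0 ->
  is_point p v -> is_point p (inversion a v).
Proof.
move=> aa0 pa0 [v0 [vv0 vp0]]; split; first by rewrite inversion_eq0.
split; first by rewrite inversion_isometry.
by rewrite -(inversion_id pa0) inversion_isometry.
Qed.

Lemma concircular_lin_rel (v1 v2 v3 v4 : vec R) (k1 k2 k3 k4 : R) : k1 != 0 ->
  k1 *: v1 - k2 *: v2 + k3 *: v3 - k4 *: v4 = 0 -> concircular v1 v2 v3 v4.
Proof.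
move=> k1_0 rel; rewrite /concircular.
set M := col_mx (col_mx v1 v2) (col_mx v3 v4).
set u : 'rV[R]_(1 + 1 + (1 + 1)) :=
  row_mx (row_mx k1%:M (- k2)%:M) (row_mx k3%:M (- k4)%:M).
have uM0 : u *m M = 0.
  by rewrite /u /M !mul_row_col !mul_scalar_mx !scaleNr addrA -rel.
have u0 : u != 0.
  rewrite /u !row_mx_eq0; apply: contra k1_0 => /andP [/andP [/eqP k1M _] _].
  by move/matrixP: k1M => /(_ 0 0); rewrite !mxE eqxx mulr1n => ->.
have : (u <= kermx M)%MS by apply/sub_kermxP.
move/mxrankS; rewrite mxrank_ker.
have : (0 < \rank u)%N by rewrite lt0n mxrank_eq0.
by move: (\rank u) (\rank M) => ? ? /=; lia.
Qed.

Section Evolution.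
Variables (D : int -> Prop) (f g : int -> vec R) (s : int -> vec R -> vec R).
Hypothesis evol : R_evolution D f g s.

Lemma R_evolution_concircular i : edge D i ->
  concircular (f i) (f (i + 1)) (g (i + 1)) (g i).
Proof.
move=> [Di Di1]; have [f' [g' [rep rel]]] := evol.
have [[c1 [c1_0 E1]] [c4 [_ E4]]] := rep i Di.
have [[c2 [_ E2]] [c3 [_ E3]]] := rep (i + 1) Di1.
apply: (concircular_lin_rel (k2 := c2) (k3 := c3) (k4 := c4) c1_0).
by rewrite -E1 -E2 -E3 -E4; case: (rel i (conj Di Di1)).
Qed.

Lemma R_evolution_inversion n : (forall i, edge D i -> s i n = n) ->
  R_evolution D f (fun i => inversion n (g i)) s.
Proof.
move=> fix_n; have [f' [g' [rep rel]]] := evol.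
exists f', (fun i => inversion n (g' i)); split.
  move=> i Di; have [f_rep [c [c0 ->]]] := rep i Di.
  by split=> //; exists c; rewrite inversionZ.
move=> i Ei; have [rel_i [rr0 s_i]] := rel i Ei; split=> //.
set r := f' i - f' (i + 1).
have rn0 : lf r n = 0.
  by apply/eqP; rewrite lfC -inversion_fixE // -s_i fix_n.
have -> : g' (i + 1) = g' i - r.
  by move/eqP: rel_i; rewrite subr_eq0 addrC => /eqP <-; rewrite addrK.
by rewrite inversionB (inversion_id rn0) [r + _]addrC subrK subrr.
Qed.

End Evolution.

End LightConeGeometry.

Theorem proposition2p6 (R : realType) (p : vec R) (D : int -> Prop)
  (f g : int -> vec R) (s : int -> vec R -> vec R) (m1 m2 : vec R) (lambda : R) :
  lf p p = -1 ->
  consecutive D ->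
  ribaucour_pair D p f g ->
  R_evolution D f g s ->
  of_type D p s m1 m2 ->
  let n := m1 + lambda *: m2 + lf (m1 + lambda *: m2) p *: p in
  lf n n != 0 ->
  ribaucour_pair D p f (fun i => inversion n (g i)) /\
  R_evolution D f (fun i => inversion n (g i)) s.
Proof.
move=> pp _ [f_pts [g_pts _]] evol [_ span_fix] n nn0.
have pn0 : lf p n = 0 by rewrite lfC /n lfDl lfZl pp; ring.
have n_span : in_span3 m1 m2 p n.
  by exists 1, lambda, (lf (m1 + lambda *: m2) p); rewrite scale1r.
have evol' := R_evolution_inversion evol (fun i Ei => span_fix i n Ei n_span).
split=> //; split=> //; split; last exact: R_evolution_concircular evol'.
by move=> i Di; apply: is_point_inversion; last exact: g_pts.
Qed.
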